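(* There exists a cap set $A \subseteq \mathbb{F}_3^{396}$ of size \[\binom{11}{7} \cdot 6^4 \cdot 12^4 \cdot 112^{62}.\]
   Context: A cap set is a set $A \subseteq \mathbb{F}_3^n$ such that the only solutions of $x+y+z=0$ with $x,y,z\in A$ are those with $x=y=z$. *)

From mathcomp Require Import all_boot all_algebra.
Set Implicit Arguments. Unset Strict Implicit. Unset Printing Implicit Defensive.
Import GRing.Theory.
Local Open Scope ring_scope.

Definition F3n (n : nat) := 'rV['F_3]_n.

Definition is_cap_set (n : nat) (A : {set F3n n}) : Prop :=
  forall x y z : F3n n, x \in A -> y \in A -> z \in A ->
    x + y + z = 0 -> x = y /\ y = z.

From HB Require Import structures.
From mathcomp Require Import all_boot all_algebra zify.
Set Implicit Arguments. Unset Strict Implicit. Unset Printing Implicit Defensive.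
Import GRing.Theory.

(* Call a set L of label vectors in {0,1,2}^m admissible if any three of them
   that are not all equal have a separating coordinate, where the three labels
   are {0,0,k} with k <> 0 or {0,1,2}.  Let T_0, T_1, T_2 be caps in F_3^6 such
   that T_p + T_q + T_r does not contain 0 whenever (p,q,r) is separating.
   Then the union over l in L of the boxes T_(l_1) x ... x T_(l_m) is a cap in
   F_3^(6m): if x + y + z = 0 with x, y, z in the boxes of l, l', l'', then
   no coordinate separates l, l', l'', so l = l' = l'', and a single box is a
   product of caps.  Applied to (l, l, l'), the same argument shows that
   distinct boxes are disjoint.  Here T_0 = E has 12 points and T_1 = P,
   T_2 = Q have 112 points; L lies in {0,1,2}^66 and comes from an admissible
   set of 330 vectors of weight 7 in {0,1,2}^11 by replacing each coordinate 0
   with one of the six vectors (2,..,2,0,1,..,1) of {0,1,2}^6 and each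
   coordinate c <> 0 with (c,..,c).  E, P, Q and the 330 vectors were found by
   computer; their properties are checked by evaluation. *)

Section CapSets.
Variable U : finZmodType.
Local Open Scope ring_scope.

Definition cap_set (A : {set U}) :=
  forall a b c, a \in A -> b \in A -> c \in A -> a + b + c = 0 -> a = b /\ b = c.

Definition sum_free (A B C : {set U}) :=
  forall a b c, a \in A -> b \in B -> c \in C -> a + b + c != 0.

Lemma sum_free_swap12 A B C : sum_free A B C -> sum_free B A C.
Proof. by move=> ABC b a c Bb Aa Cc; rewrite (addrC b); apply: ABC. Qed.

Lemma sum_free_swap23 A B C : sum_free A B C -> sum_free A C B.
Proof. by move=> ABC a c b Aa Cc Bb; rewrite addrAC; apply: ABC. Qed.

End CapSets.

Section InjectiveAdditive.
Variables (U V : zmodType) (f : U -> V).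
Hypotheses (f_inj : injective f) (fD : {morph f : u v / (u + v)%R}).
Local Open Scope ring_scope.

Lemma morph_sum3_eq0 a b c : (f a + f b + f c == 0) = (a + b + c == 0).
Proof.
have f0 : f 0 = 0 by apply/(addrI (f 0)); rewrite -fD !addr0.
by rewrite -!fD -f0 (inj_eq f_inj).
Qed.

End InjectiveAdditive.

Lemma cap_set_image (U V : finZmodType) (f : U -> V) (A : {set U}) :
  injective f -> {morph f : u v / (u + v)%R} -> cap_set A -> cap_set (f @: A).
Proof.
move=> f_inj fD capA _ _ _ /imsetP[a Aa ->] /imsetP[b Ab ->] /imsetP[c Ac ->] /eqP.
by rewrite (morph_sum3_eq0 f_inj fD) => /eqP /(capA a b c Aa Ab Ac) [-> ->].
Qed.

Lemma sorted3_ind (T : Type) (le : rel T) (P : T -> T -> T -> Prop) :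
    total le -> (forall x y z, P x y z -> P y x z) ->
    (forall x y z, P x y z -> P x z y) ->
    (forall x y z, le x y -> le y z -> P x y z) ->
  forall x y z, P x y z.
Proof.
move=> le_total P12 P23 Psorted x y z.
case/orP: (le_total x y) => [xy|yx]; case/orP: (le_total y z) => [yz|zy];
  case/orP: (le_total x z) => [xz|zx].
- exact: Psorted.
- exact: Psorted.
- exact: P23 _ _ _ (Psorted _ _ _ xz zy).
- exact: P23 _ _ _ (P12 _ _ _ (Psorted _ _ _ zx xy)).
- exact: P12 _ _ _ (Psorted _ _ _ yx xz).
- exact: P12 _ _ _ (P23 _ _ _ (Psorted _ _ _ yz zx)).
- exact: P23 _ _ _ (Psorted _ _ _ xz zy).
- exact: P12 _ _ _ (P23 _ _ _ (P12 _ _ _ (Psorted _ _ _ zy yx))).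
Qed.

Definition separating (p q r : nat) : bool :=
  let zeros := ((p == 0) + (q == 0) + (r == 0))%N in
  (zeros == 2) || (zeros == 1) && (p + q + r == 3).

Lemma separating_swap12 p q r : separating p q r = separating q p r.
Proof. by rewrite /separating (addnC (p == 0)) (addnC p q). Qed.

Lemma separating_swap23 p q r : separating p q r = separating p r q.
Proof. by rewrite /separating -!addnA (addnC (q == 0)) (addnC q r). Qed.

Definition admissible (X I : finType) (D : {set X}) (lab : X -> I -> nat) :=
  forall x y z, x \in D -> y \in D -> z \in D -> ~ (x = y /\ y = z) ->
    exists i, separating (lab x i) (lab y i) (lab z i).

Lemma admissible_ord n (I : finType) (lab : 'I_n -> I -> nat) :
    (forall a b : 'I_n, a != b -> exists i, (lab a i == 0) && (lab b i != 0)) ->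
    (forall a b c : 'I_n, a < b -> b < c ->
       exists i, separating (lab a i) (lab b i) (lab c i)) ->
  admissible [set: 'I_n] lab.
Proof.
move=> incomparable sep_sorted x y z _ _ _.
move: x y z; apply: (@sorted3_ind _ (fun a b : 'I_n => a <= b)).
- by move=> a b; apply: leq_total.
- move=> a b c Pabc nbac; have [|i] := Pabc; last by exists i; rewrite separating_swap12.
  by move=> [eab ebc]; apply: nbac; subst.
- move=> a b c Pabc nacb; have [|i] := Pabc; last by exists i; rewrite separating_swap23.
  by move=> [eab ebc]; apply: nacb; subst.
move=> a b c ab bc neq.
have [eab|nab] := eqVneq a b.
  have [|i /andP[/eqP b0 c0]] := incomparable b c; first by apply: contra_not_neq neq; subst.
  by exists i; rewrite /separating eab b0 (negbTE c0).
have [ebc|nbc] := eqVneq b c.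
  have [|i /andP[/eqP c0 a0]] := incomparable c a; first by rewrite -ebc eq_sym.
  by exists i; rewrite /separating ebc c0 (negbTE a0).
by apply: sep_sorted; rewrite ltn_neqAle ?ab ?bc andbT.
Qed.

Lemma card_ffun_in (I V : finType) (S : I -> {set V}) :
  #|[set f : {ffun I -> V} | [forall i, f i \in S i]]| = (\prod_i #|S i|)%N.
Proof.
have famS : [set f : {ffun I -> V} | [forall i, f i \in S i]] =i family (fun i => mem (S i)).
  by move=> f; rewrite inE; apply/forallP/familyP.
by rewrite (eq_card famS) card_family foldrE big_map big_enum.
Qed.

Lemma prod_nat_if (I : finType) (A : {set I}) (m n : nat) :
  (\prod_i (if i \in A then m else n) = m ^ #|A| * n ^ #|~: A|)%N.
Proof.
rewrite big_if /= !prod_nat_const; congr (m ^ _ * n ^ _)%N; apply: eq_card => i.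
by rewrite inE.
Qed.

Lemma card_bigcup_disjoint (I T : finType) (D : {set I}) (B : I -> {set T}) :
    {in D &, forall x y, x != y -> [disjoint B x & B y]} ->
  #|\bigcup_(x in D) B x| = (\sum_(x in D) #|B x|)%N.
Proof.
move=> disjB.
rewrite (eq_bigr (fun x => \sum_t (t \in B x : nat))%N); last first.
  by move=> x _; rewrite -sum1_card big_mkcond.
rewrite exchange_big -sum1_card big_mkcond /=; apply: eq_bigr => t _.
have [/bigcupP[x Dx Bxt] | notBt] := boolP (t \in \bigcup_(x in D) B x).
  rewrite (bigD1 x) //= Bxt big1 // => y /andP[Dy yx].
  by rewrite (disjointFr (disjB _ _ Dx Dy _)) // eq_sym.
rewrite big1 // => x Dx; apply/eqP; rewrite eqb0; apply: contra notBt => Bxt.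
by apply/bigcupP; exists x.
Qed.

(* Declares the finZmodType structure of {ffun I -> U} for U : finZmodType. *)
HB.saturate finfun_of.

Section BoxUnion.
Variables (I X : finType) (U : finZmodType).
Variables (T : nat -> {set U}) (D : {set X}) (lab : X -> I -> nat).
Local Open Scope ring_scope.
Hypothesis U_char3 : forall u : U, u + u + u = 0.
Hypothesis T_cap : forall p, cap_set (T p).
Hypothesis T_sum_free : forall p q r, separating p q r -> sum_free (T p) (T q) (T r).
Hypothesis D_admissible : admissible D lab.

Definition box x : {set {ffun I -> U}} :=
  [set f : {ffun I -> U} | [forall i, f i \in T (lab x i)]].

Definition box_union := \bigcup_(x in D) box x.

Lemma box_cap x : cap_set (box x).
Proof.
move=> f g h; rewrite !inE => /forallP Tf /forallP Tg /forallP Th fgh0.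
have coord i := T_cap (Tf i) (Tg i) (Th i).
have fgh0_at i : f i + g i + h i = 0.
  by have := congr1 (fun k : {ffun I -> U} => k i) fgh0; rewrite !ffunE.
by split; apply/ffunP => i; have [] := coord i (fgh0_at i).
Qed.

Lemma box_sum_free x y z : x \in D -> y \in D -> z \in D -> ~ (x = y /\ y = z) ->
  sum_free (box x) (box y) (box z).
Proof.
move=> Dx Dy Dz /(D_admissible Dx Dy Dz) [i sep_i] f g h.
rewrite !inE => /forallP Tf /forallP Tg /forallP Th.
apply: contraNneq (T_sum_free sep_i (Tf i) (Tg i) (Th i)) => fgh0.
by have := congr1 (fun k : {ffun I -> U} => k i) fgh0; rewrite !ffunE => ->.
Qed.

Lemma box_union_cap : cap_set box_union.
Proof.
move=> f g h /bigcupP[x Dx Bf] /bigcupP[y Dy Bg] /bigcupP[z Dz Bh] fgh0.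
have [/andP[/eqP exy /eqP eyz]|nxyz] := boolP ((x == y) && (y == z)).
  by subst y z; apply: (box_cap Bf Bg Bh).
have nxyz' : ~ (x = y /\ y = z) by move=> [exy eyz]; rewrite exy eyz !eqxx in nxyz.
by move: (box_sum_free Dx Dy Dz nxyz' Bf Bg Bh); rewrite fgh0 eqxx.
Qed.

Lemma box_disjoint : {in D &, forall x y, x != y -> [disjoint box x & box y]}.
Proof.
move=> x y Dx Dy nxy; apply/pred0P => f /=; apply/negbTE/negP => /andP[Bxf Byf].
have nxxy : ~ (x = x /\ x = y) by move=> [_ exy]; rewrite exy eqxx in nxy.
have fff0 : f + f + f = 0 by apply/ffunP => i; rewrite !ffunE U_char3.
by move: (box_sum_free Dx Dx Dy nxxy Bxf Bxf Byf); rewrite fff0 eqxx.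
Qed.

Lemma card_box_union : #|box_union| = (\sum_(x in D) \prod_i #|T (lab x i)|)%N.
Proof.
rewrite card_bigcup_disjoint; last exact: box_disjoint.
by apply: eq_bigr => x _; apply: card_ffun_in.
Qed.

End BoxUnion.

Definition blowup_label (K J : Type) (w : K -> J -> nat) (p : nat) (k : K) (j : J) :=
  if p == 0 then w k j else p.

Section Blowup.
Variables (I X J K : finType) (D : {set X}) (lab : X -> I -> nat).
Variables (w : K -> J -> nat) (k0 : K).

(* Where lab x is nonzero the inner index is fixed to k0, so that every
   blown-up label vector is obtained exactly once. *)
Definition blowup : {set X * {ffun I -> K}} :=
  [set xk : X * {ffun I -> K} |
    (xk.1 \in D) && [forall i, (lab xk.1 i != 0) ==> (xk.2 i == k0)]].

Definition blowup_lab (xk : X * {ffun I -> K}) (ij : I * J) : nat :=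
  blowup_label w (lab xk.1 ij.1) (xk.2 ij.1) ij.2.

Hypothesis lab_lt3 : forall x i, lab x i < 3.
Hypothesis D_admissible : admissible D lab.
Hypothesis w_admissible : admissible [set: K] w.
Hypothesis w_compatible : forall p q r, p < 3 -> q < 3 -> r < 3 -> separating p q r ->
  forall s t u, exists j,
    separating (blowup_label w p s j) (blowup_label w q t j) (blowup_label w r u j).
Hypothesis w_one_zero : forall k, #|[set j | w k j == 0]| = 1.

Lemma blowup_admissible : admissible blowup blowup_lab.
Proof.
move=> [x s] [y t] [z u]; rewrite !inE /=.
move=> /andP[Dx /forallP xs] /andP[Dy /forallP yt] /andP[Dz /forallP zu] neq.
have [/andP[/eqP exy /eqP eyz]|nxyz] := boolP ((x == y) && (y == z)); last first.
  have nxyz' : ~ (x = y /\ y = z) by move=> [exy eyz]; rewrite exy eyz !eqxx in nxyz.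
  have [i sep_i] := D_admissible Dx Dy Dz nxyz'.
  have [j sep_j] := w_compatible (lab_lt3 x i) (lab_lt3 y i) (lab_lt3 z i) sep_i
    (s i) (t i) (u i).
  by exists (i, j).
subst y z.
have [i nstu] : exists i, ~~ ((s i == t i) && (t i == u i)).
  apply/existsP; apply: contraT; rewrite negb_exists => /forallP stu.
  exfalso; apply: neq; split; congr pair; apply/ffunP => i;
    by have /andP[/eqP sti /eqP tui] := negbNE (stu i).
have lab0 : lab x i = 0.
  apply/eqP; apply: contraNT nstu => nz.
  by rewrite (eqP (implyP (xs i) nz)) (eqP (implyP (yt i) nz)) (eqP (implyP (zu i) nz))
    !eqxx.
have nstu' : ~ (s i = t i /\ t i = u i).
  by move=> [sti tui]; rewrite sti tui !eqxx in nstu.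
have [j sep_j] := w_admissible (in_setT (s i)) (in_setT (t i)) (in_setT (u i)) nstu'.
by exists (i, j); rewrite /blowup_lab /blowup_label /= lab0.
Qed.

Lemma card_blowup : #|blowup| = (\sum_(x in D) #|K| ^ #|[set i | lab x i == 0]|)%N.
Proof.
rewrite -sum1_card.
transitivity (\sum_(x in D)
  \sum_(s : {ffun I -> K} | [forall i, (lab x i != 0) ==> (s i == k0)]) 1)%N.
  by rewrite pair_big_dep; apply: eq_bigl => -[x s]; rewrite inE.
apply: eq_bigr => x _; rewrite sum1dep_card.
pose S i := [set k | (lab x i != 0) ==> (k == k0)].
rewrite (eq_card (B := [set s : {ffun I -> K} | [forall i, s i \in S i]])); last first.
  by move=> s; rewrite !inE; apply: eq_forallb => i; rewrite inE.
rewrite card_ffun_in (eq_bigr (fun i => if i \in [set i | lab x i == 0] then #|K| else 1)%N).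
  by rewrite prod_nat_if exp1n muln1.
move=> i _; rewrite /S !inE; case: (lab x i == 0).
  by apply: eq_card => k; rewrite !inE.
by rewrite -(cards1 k0); apply: eq_card => k; rewrite !inE.
Qed.

Lemma card_blowup_lab_eq0 xk :
  #|[set ij | blowup_lab xk ij == 0]| = #|[set i | lab xk.1 i == 0]|.
Proof.
rewrite -!sum1dep_card.
transitivity (\sum_i \sum_(j | blowup_lab xk (i, j) == 0) 1)%N.
  by rewrite pair_big_dep; apply: eq_bigl => -[i j].
rewrite [RHS]big_mkcond; apply: eq_bigr => i _.
rewrite /blowup_lab /blowup_label /=; case: eqP => [_|/eqP nz]; last first.
  by rewrite big_pred0 // => j; rewrite (negbTE nz).
by rewrite sum1dep_card w_one_zero.
Qed.

End Blowup.

Section FlattenBlocks.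
Context {R : nmodType} {m n p : nat}.

Definition flatten_blocks (f : {ffun 'I_m * 'I_n -> 'rV[R]_p}) : 'rV[R]_(m * (n * p)) :=
  mxvec (\matrix_i mxvec (\matrix_j f (i, j))).

Lemma flatten_blocksD : {morph flatten_blocks : f g / (f + g)%R}.
Proof.
move=> f g; apply/rowP => k; case/mxvec_indexP: k => i k.
by case/mxvec_indexP: k => j d; rewrite !(mxE, mxvecE, ffunE).
Qed.

Lemma flatten_blocks_inj : injective flatten_blocks.
Proof.
move=> f g /(congr1 vec_mx); rewrite !mxvecK => /row_matrixP fg.
apply/ffunP => -[i j]; move: (fg i); rewrite !rowK => /(congr1 vec_mx).
by rewrite !mxvecK => /row_matrixP/(_ j); rewrite !rowK.
Qed.

End FlattenBlocks.

Fixpoint triplewise (T : Type) (r : T -> T -> T -> bool) (s : seq T) : bool :=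
  if s is x :: s' then pairwise (r x) s' && triplewise r s' else true.

Lemma triplewiseP (T : Type) (x0 : T) r s : triplewise r s ->
  forall i j k, i < j -> j < k -> k < size s ->
    r (nth x0 s i) (nth x0 s j) (nth x0 s k).
Proof.
elim: s => [_ i j k _ _|x s IHs /andP[/(pairwiseP x0) rx /IHs{}IHs]].
  by rewrite ltn0.
case=> [|i] [|j] [|k] //=; rewrite !ltnS; last exact: IHs.
by move=> _ jk ks; apply: rx => //; rewrite inE (ltn_trans jk ks).
Qed.

Fixpoint separated (u v w : seq nat) : bool :=
  match u, v, w with
  | p :: u', q :: v', r :: w' => separating p q r || separated u' v' w'
  | _, _, _ => false
  end.

Lemma separatedP u v w : separated u v w ->
  exists2 i, i < size u & separating (nth 0 u i) (nth 0 v i) (nth 0 w i).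
Proof.
elim: u v w => [|p u IHu] [|q v] [|r w] //= /orP[sep | /IHu[i lt_iu sep]].
  by exists 0.
by exists i.+1.
Qed.

Fixpoint vanishes_in_support (u v : seq nat) : bool :=
  match u, v with
  | p :: u', q :: v' => (p == 0) && (q != 0) || vanishes_in_support u' v'
  | _, _ => false
  end.

Lemma vanishes_in_supportP u v : vanishes_in_support u v ->
  exists2 i, i < size u & (nth 0 u i == 0) && (nth 0 v i != 0).
Proof.
elim: u v => [|p u IHu] [|q v] //= /orP[pq | /IHu[i lt_iu pq]].
  by exists 0.
by exists i.+1.
Qed.

Lemma card_nth_count n (s : seq nat) (a : pred nat) : size s = n ->
  #|[set i : 'I_n | a (nth 0 s i)]| = count a s.
Proof. by move=> <-; rewrite -sum1dep_card -sum1_count (big_nth 0) big_mkord. Qed.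

Definition outer_vectors : seq (seq nat) := [::
  [:: 1; 2; 2; 2; 1; 2; 1; 0; 0; 0; 0]; [:: 2; 2; 1; 1; 1; 2; 0; 2; 0; 0; 0]; [:: 2; 1; 2; 2; 1; 2; 0; 0; 1; 0; 0];
  [:: 1; 1; 2; 1; 1; 1; 0; 0; 0; 1; 0]; [:: 2; 2; 2; 1; 2; 1; 0; 0; 0; 0; 1]; [:: 2; 1; 1; 1; 2; 0; 2; 2; 0; 0; 0];
  [:: 1; 2; 2; 2; 1; 0; 1; 0; 2; 0; 0]; [:: 2; 1; 1; 1; 2; 0; 2; 0; 0; 2; 0]; [:: 2; 1; 1; 1; 2; 0; 2; 0; 0; 0; 2];
  [:: 2; 2; 1; 2; 2; 0; 0; 1; 1; 0; 0]; [:: 1; 2; 1; 2; 2; 0; 0; 2; 0; 1; 0]; [:: 1; 2; 2; 1; 2; 0; 0; 1; 0; 0; 2];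
  [:: 2; 1; 1; 2; 1; 0; 0; 0; 2; 2; 0]; [:: 1; 2; 1; 1; 1; 0; 0; 0; 1; 0; 1]; [:: 2; 2; 1; 2; 1; 0; 0; 0; 0; 1; 2];
  [:: 1; 2; 1; 1; 0; 1; 1; 1; 0; 0; 0]; [:: 1; 2; 2; 1; 0; 2; 2; 0; 1; 0; 0]; [:: 2; 1; 2; 1; 0; 2; 1; 0; 0; 2; 0];
  [:: 1; 1; 1; 2; 0; 2; 2; 0; 0; 0; 2]; [:: 2; 2; 1; 2; 0; 2; 0; 1; 1; 0; 0]; [:: 2; 1; 1; 2; 0; 1; 0; 2; 0; 2; 0];
  [:: 2; 2; 2; 1; 0; 1; 0; 2; 0; 0; 1]; [:: 1; 2; 2; 2; 0; 1; 0; 0; 1; 2; 0]; [:: 1; 1; 1; 2; 0; 2; 0; 0; 2; 0; 2];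
  [:: 1; 1; 1; 2; 0; 2; 0; 0; 0; 2; 2]; [:: 1; 1; 2; 1; 0; 0; 2; 2; 2; 0; 0]; [:: 1; 1; 2; 2; 0; 0; 2; 1; 0; 2; 0];
  [:: 2; 1; 2; 2; 0; 0; 1; 1; 0; 0; 2]; [:: 1; 1; 1; 2; 0; 0; 1; 0; 1; 1; 0]; [:: 2; 1; 2; 2; 0; 0; 2; 0; 1; 0; 1];
  [:: 2; 2; 1; 2; 0; 0; 1; 0; 0; 2; 1]; [:: 2; 2; 1; 2; 0; 0; 0; 1; 1; 2; 0]; [:: 1; 1; 2; 1; 0; 0; 0; 2; 2; 0; 2];
  [:: 2; 1; 1; 1; 0; 0; 0; 1; 0; 1; 1]; [:: 2; 1; 2; 1; 0; 0; 0; 0; 1; 2; 2]; [:: 1; 1; 2; 0; 2; 2; 1; 2; 0; 0; 0];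
  [:: 2; 1; 2; 0; 1; 2; 2; 0; 1; 0; 0]; [:: 2; 2; 2; 0; 2; 1; 1; 0; 0; 1; 0]; [:: 2; 1; 1; 0; 1; 1; 1; 0; 0; 0; 1];
  [:: 2; 1; 2; 0; 1; 2; 0; 2; 1; 0; 0]; [:: 1; 2; 2; 0; 2; 2; 0; 1; 0; 1; 0]; [:: 2; 2; 1; 0; 2; 2; 0; 1; 0; 0; 1];
  [:: 1; 2; 1; 0; 2; 1; 0; 0; 2; 2; 0]; [:: 1; 2; 1; 0; 2; 1; 0; 0; 2; 0; 2]; [:: 1; 1; 2; 0; 2; 2; 0; 0; 0; 2; 1];
  [:: 2; 2; 1; 0; 1; 0; 1; 2; 2; 0; 0]; [:: 2; 1; 2; 0; 1; 0; 2; 2; 0; 1; 0]; [:: 2; 1; 2; 0; 2; 0; 1; 1; 0; 0; 2];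
  [:: 1; 1; 1; 0; 2; 0; 1; 0; 1; 1; 0]; [:: 1; 1; 2; 0; 1; 0; 2; 0; 2; 0; 2]; [:: 2; 2; 1; 0; 1; 0; 2; 0; 0; 1; 2];
  [:: 1; 2; 2; 0; 1; 0; 0; 2; 1; 2; 0]; [:: 2; 2; 2; 0; 1; 0; 0; 1; 2; 0; 1]; [:: 1; 1; 2; 0; 2; 0; 0; 2; 0; 2; 1];
  [:: 1; 1; 2; 0; 2; 0; 0; 0; 2; 2; 1]; [:: 2; 2; 2; 0; 0; 1; 1; 2; 1; 0; 0]; [:: 1; 2; 2; 0; 0; 2; 2; 1; 0; 1; 0];
  [:: 1; 2; 1; 0; 0; 2; 2; 2; 0; 0; 1]; [:: 1; 1; 1; 0; 0; 2; 1; 0; 1; 1; 0]; [:: 1; 2; 2; 0; 0; 2; 1; 0; 2; 0; 1];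
  [:: 1; 2; 2; 0; 0; 1; 1; 0; 0; 2; 2]; [:: 2; 1; 1; 0; 0; 1; 0; 2; 2; 2; 0]; [:: 1; 1; 2; 0; 0; 1; 0; 1; 1; 0; 1];
  [:: 1; 2; 2; 0; 0; 2; 0; 1; 0; 1; 2]; [:: 2; 1; 2; 0; 0; 1; 0; 0; 2; 1; 2]; [:: 1; 1; 1; 0; 0; 0; 1; 2; 1; 1; 0];
  [:: 2; 1; 2; 0; 0; 0; 1; 1; 2; 0; 2]; [:: 1; 2; 1; 0; 0; 0; 2; 2; 0; 2; 1]; [:: 1; 1; 1; 0; 0; 0; 1; 0; 1; 1; 2];
  [:: 1; 2; 1; 0; 0; 0; 0; 1; 2; 2; 2]; [:: 2; 2; 0; 2; 1; 1; 2; 1; 0; 0; 0]; [:: 1; 2; 0; 1; 2; 2; 2; 0; 1; 0; 0];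
  [:: 1; 1; 0; 1; 1; 1; 2; 0; 0; 1; 0]; [:: 1; 2; 0; 2; 2; 1; 2; 0; 0; 0; 1]; [:: 2; 2; 0; 1; 2; 1; 0; 2; 1; 0; 0];
  [:: 1; 1; 0; 1; 1; 1; 0; 2; 0; 1; 0]; [:: 1; 2; 0; 1; 2; 2; 0; 1; 0; 0; 2]; [:: 1; 1; 0; 1; 1; 1; 0; 0; 2; 1; 0];
  [:: 2; 2; 0; 2; 1; 1; 0; 0; 1; 0; 2]; [:: 1; 1; 0; 1; 1; 1; 0; 0; 0; 1; 2]; [:: 2; 1; 0; 1; 1; 0; 1; 1; 1; 0; 0];
  [:: 1; 1; 0; 2; 2; 0; 2; 1; 0; 2; 0]; [:: 1; 2; 0; 1; 2; 0; 2; 1; 0; 0; 2]; [:: 2; 2; 0; 2; 1; 0; 2; 0; 1; 1; 0];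
  [:: 2; 2; 0; 2; 2; 0; 1; 0; 1; 0; 1]; [:: 2; 1; 0; 2; 2; 0; 1; 0; 0; 1; 2]; [:: 1; 2; 0; 2; 1; 0; 0; 2; 1; 2; 0];
  [:: 2; 1; 0; 2; 1; 0; 0; 2; 2; 0; 1]; [:: 2; 1; 0; 2; 1; 0; 0; 2; 0; 2; 1]; [:: 1; 2; 0; 2; 2; 0; 0; 0; 2; 1; 1];
  [:: 2; 1; 0; 2; 0; 1; 1; 2; 2; 0; 0]; [:: 2; 2; 0; 1; 0; 2; 1; 2; 0; 1; 0]; [:: 2; 1; 0; 1; 0; 1; 2; 2; 0; 0; 2];
  [:: 2; 1; 0; 2; 0; 1; 1; 0; 2; 2; 0]; [:: 1; 2; 0; 1; 0; 2; 2; 0; 1; 0; 2]; [:: 1; 2; 0; 2; 0; 1; 1; 0; 0; 2; 2];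
  [:: 2; 2; 0; 1; 0; 1; 0; 1; 2; 2; 0]; [:: 1; 1; 0; 2; 0; 1; 0; 1; 1; 0; 1]; [:: 1; 2; 0; 1; 0; 2; 0; 2; 0; 2; 1];
  [:: 2; 1; 0; 1; 0; 2; 0; 0; 1; 2; 2]; [:: 2; 2; 0; 1; 0; 0; 1; 2; 2; 1; 0]; [:: 2; 2; 0; 1; 0; 0; 2; 1; 2; 0; 1];
  [:: 2; 2; 0; 1; 0; 0; 1; 2; 0; 1; 2]; [:: 1; 2; 0; 2; 0; 0; 2; 0; 2; 1; 1]; [:: 1; 2; 0; 2; 0; 0; 0; 2; 2; 1; 1];
  [:: 1; 1; 0; 0; 2; 2; 1; 2; 2; 0; 0]; [:: 1; 1; 0; 0; 2; 2; 1; 2; 0; 2; 0]; [:: 2; 2; 0; 0; 1; 1; 2; 1; 0; 0; 2];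
  [:: 2; 1; 0; 0; 2; 1; 2; 0; 1; 2; 0]; [:: 2; 2; 0; 0; 2; 2; 1; 0; 1; 0; 1]; [:: 2; 1; 0; 0; 2; 2; 2; 0; 0; 1; 1];
  [:: 2; 1; 0; 0; 2; 2; 0; 1; 2; 1; 0]; [:: 1; 1; 0; 0; 2; 1; 0; 1; 1; 0; 1]; [:: 2; 2; 0; 0; 2; 1; 0; 2; 0; 1; 1];
  [:: 2; 2; 0; 0; 1; 1; 0; 0; 2; 2; 1]; [:: 2; 1; 0; 0; 2; 0; 2; 1; 2; 1; 0]; [:: 1; 1; 0; 0; 1; 0; 2; 2; 2; 0; 2];
  [:: 1; 2; 0; 0; 1; 0; 1; 1; 0; 1; 1]; [:: 2; 2; 0; 0; 2; 0; 1; 0; 1; 2; 1]; [:: 1; 2; 0; 0; 1; 0; 0; 2; 1; 2; 2];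
  [:: 2; 2; 0; 0; 0; 2; 1; 1; 1; 2; 0]; [:: 1; 1; 0; 0; 0; 1; 2; 1; 1; 0; 1]; [:: 1; 2; 0; 0; 0; 1; 1; 2; 0; 2; 2];
  [:: 2; 1; 0; 0; 0; 2; 2; 0; 2; 1; 1]; [:: 1; 1; 0; 0; 0; 1; 0; 1; 1; 2; 1]; [:: 2; 1; 0; 0; 0; 0; 1; 2; 2; 2; 1];
  [:: 1; 0; 1; 1; 2; 1; 1; 1; 0; 0; 0]; [:: 2; 0; 2; 1; 1; 1; 2; 0; 2; 0; 0]; [:: 1; 0; 1; 2; 1; 2; 2; 0; 0; 2; 0];
  [:: 2; 0; 2; 1; 1; 2; 1; 0; 0; 0; 2]; [:: 2; 0; 2; 1; 2; 1; 0; 2; 1; 0; 0]; [:: 2; 0; 2; 1; 1; 2; 0; 1; 0; 2; 0];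
  [:: 2; 0; 1; 2; 2; 2; 0; 1; 0; 0; 1]; [:: 2; 0; 1; 1; 2; 2; 0; 0; 2; 1; 0]; [:: 1; 0; 1; 1; 1; 2; 0; 0; 1; 0; 1];
  [:: 2; 0; 2; 2; 1; 2; 0; 0; 0; 1; 1]; [:: 1; 0; 2; 2; 2; 0; 2; 1; 1; 0; 0]; [:: 1; 0; 1; 2; 2; 0; 2; 2; 0; 1; 0];
  [:: 2; 0; 1; 2; 1; 0; 2; 1; 0; 0; 2]; [:: 1; 0; 2; 1; 2; 0; 1; 0; 2; 2; 0]; [:: 1; 0; 1; 1; 1; 0; 2; 0; 1; 0; 1];
  [:: 2; 0; 1; 2; 2; 0; 1; 0; 0; 2; 1]; [:: 1; 0; 1; 2; 2; 0; 0; 2; 2; 1; 0]; [:: 1; 0; 1; 1; 1; 0; 0; 2; 1; 0; 1];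
  [:: 2; 0; 2; 1; 1; 0; 0; 1; 0; 2; 2]; [:: 1; 0; 1; 1; 1; 0; 0; 0; 1; 2; 1]; [:: 1; 0; 1; 1; 0; 1; 1; 1; 2; 0; 0];
  [:: 1; 0; 1; 1; 0; 1; 1; 1; 0; 2; 0]; [:: 1; 0; 1; 1; 0; 1; 1; 1; 0; 0; 2]; [:: 2; 0; 1; 1; 0; 2; 2; 0; 2; 1; 0];
  [:: 1; 0; 2; 2; 0; 2; 1; 0; 2; 0; 1]; [:: 2; 0; 1; 2; 0; 2; 1; 0; 0; 2; 1]; [:: 1; 0; 2; 2; 0; 1; 0; 2; 1; 2; 0];
  [:: 2; 0; 2; 1; 0; 2; 0; 1; 1; 0; 2]; [:: 2; 0; 2; 2; 0; 1; 0; 1; 0; 1; 2]; [:: 1; 0; 2; 2; 0; 1; 0; 0; 1; 2; 2];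
  [:: 2; 0; 1; 1; 0; 0; 2; 2; 1; 2; 0]; [:: 2; 0; 2; 1; 0; 0; 2; 1; 2; 0; 1]; [:: 1; 0; 2; 1; 0; 0; 2; 2; 0; 1; 2];
  [:: 1; 0; 2; 1; 0; 0; 2; 0; 2; 1; 2]; [:: 2; 0; 2; 2; 0; 0; 0; 2; 1; 1; 1]; [:: 2; 0; 1; 0; 1; 2; 1; 2; 2; 0; 0];
  [:: 2; 0; 2; 0; 2; 1; 1; 2; 0; 1; 0]; [:: 1; 0; 2; 0; 1; 1; 2; 2; 0; 0; 2]; [:: 1; 0; 1; 0; 1; 2; 2; 0; 2; 2; 0];
  [:: 2; 0; 1; 0; 2; 1; 2; 0; 1; 0; 2]; [:: 1; 0; 1; 0; 1; 2; 2; 0; 0; 2; 2]; [:: 2; 0; 1; 0; 1; 1; 0; 1; 1; 1; 0];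
  [:: 1; 0; 2; 0; 1; 1; 0; 2; 2; 0; 2]; [:: 2; 0; 1; 0; 2; 2; 0; 1; 0; 2; 1]; [:: 2; 0; 2; 0; 1; 1; 0; 0; 2; 2; 1];
  [:: 1; 0; 2; 0; 2; 0; 2; 1; 1; 2; 0]; [:: 2; 0; 1; 0; 1; 0; 1; 2; 2; 0; 2]; [:: 1; 0; 2; 0; 1; 0; 1; 1; 0; 1; 1];
  [:: 2; 0; 1; 0; 2; 0; 2; 0; 2; 1; 1]; [:: 1; 0; 1; 0; 2; 0; 0; 1; 2; 2; 2]; [:: 1; 0; 2; 0; 0; 1; 2; 2; 2; 1; 0];
  [:: 2; 0; 1; 0; 0; 1; 2; 2; 1; 0; 2]; [:: 2; 0; 1; 0; 0; 2; 1; 2; 0; 1; 2]; [:: 2; 0; 1; 0; 0; 1; 2; 0; 1; 2; 2];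
  [:: 2; 0; 2; 0; 0; 2; 0; 2; 1; 1; 1]; [:: 2; 0; 2; 0; 0; 0; 2; 2; 1; 1; 1]; [:: 1; 0; 0; 2; 1; 2; 2; 1; 2; 0; 0];
  [:: 2; 0; 0; 1; 2; 2; 2; 1; 0; 1; 0]; [:: 1; 0; 0; 2; 2; 1; 2; 2; 0; 0; 1]; [:: 1; 0; 0; 1; 2; 2; 1; 0; 2; 2; 0];
  [:: 1; 0; 0; 2; 2; 1; 2; 0; 2; 0; 1]; [:: 2; 0; 0; 1; 1; 2; 1; 0; 0; 2; 2]; [:: 1; 0; 0; 2; 1; 2; 0; 1; 2; 2; 0];
  [:: 1; 0; 0; 2; 1; 2; 0; 1; 2; 0; 2]; [:: 2; 0; 0; 2; 2; 1; 0; 1; 0; 1; 2]; [:: 1; 0; 0; 2; 2; 2; 0; 0; 1; 1; 2];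
  [:: 1; 0; 0; 1; 2; 0; 1; 2; 2; 2; 0]; [:: 1; 0; 0; 2; 2; 0; 1; 2; 1; 0; 2]; [:: 1; 0; 0; 2; 1; 0; 1; 1; 0; 1; 1];
  [:: 2; 0; 0; 2; 1; 0; 2; 0; 1; 1; 2]; [:: 2; 0; 0; 1; 1; 0; 0; 2; 2; 1; 2]; [:: 2; 0; 0; 2; 0; 2; 1; 1; 1; 2; 0];
  [:: 1; 0; 0; 2; 0; 2; 1; 2; 1; 0; 2]; [:: 1; 0; 0; 1; 0; 2; 2; 2; 0; 2; 1]; [:: 2; 0; 0; 1; 0; 1; 1; 0; 1; 1; 1];
  [:: 2; 0; 0; 2; 0; 1; 0; 1; 2; 1; 2]; [:: 2; 0; 0; 1; 0; 0; 2; 1; 2; 2; 1]; [:: 2; 0; 0; 0; 2; 2; 1; 1; 1; 2; 0];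
  [:: 2; 0; 0; 0; 2; 1; 1; 1; 2; 0; 2]; [:: 1; 0; 0; 0; 1; 2; 1; 1; 0; 1; 1]; [:: 2; 0; 0; 0; 1; 1; 2; 0; 2; 2; 1];
  [:: 1; 0; 0; 0; 2; 2; 0; 2; 1; 1; 2]; [:: 1; 0; 0; 0; 1; 0; 1; 1; 2; 1; 1]; [:: 1; 0; 0; 0; 0; 1; 2; 2; 2; 1; 2];
  [:: 0; 1; 2; 2; 2; 1; 2; 1; 0; 0; 0]; [:: 0; 2; 2; 1; 1; 1; 2; 0; 2; 0; 0]; [:: 0; 2; 1; 2; 2; 1; 2; 0; 0; 1; 0];
  [:: 0; 1; 1; 2; 1; 1; 1; 0; 0; 0; 1]; [:: 0; 2; 1; 1; 1; 2; 0; 2; 2; 0; 0]; [:: 0; 1; 2; 2; 2; 1; 0; 1; 0; 2; 0];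
  [:: 0; 2; 1; 1; 1; 2; 0; 2; 0; 0; 2]; [:: 0; 2; 2; 1; 2; 2; 0; 0; 1; 1; 0]; [:: 0; 1; 2; 1; 2; 2; 0; 0; 2; 0; 1];
  [:: 0; 2; 1; 1; 2; 1; 0; 0; 0; 2; 2]; [:: 0; 1; 2; 1; 1; 0; 1; 1; 1; 0; 0]; [:: 0; 1; 2; 2; 1; 0; 2; 2; 0; 1; 0];
  [:: 0; 2; 1; 2; 1; 0; 2; 1; 0; 0; 2]; [:: 0; 2; 2; 1; 2; 0; 2; 0; 1; 1; 0]; [:: 0; 2; 1; 1; 2; 0; 1; 0; 2; 0; 2];
  [:: 0; 1; 2; 2; 2; 0; 1; 0; 0; 1; 2]; [:: 0; 1; 1; 2; 1; 0; 0; 2; 2; 2; 0]; [:: 0; 1; 1; 2; 2; 0; 0; 2; 1; 0; 2];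
  [:: 0; 1; 1; 1; 2; 0; 0; 1; 0; 1; 1]; [:: 0; 2; 2; 1; 2; 0; 0; 0; 1; 1; 2]; [:: 0; 1; 1; 2; 0; 2; 2; 1; 2; 0; 0];
  [:: 0; 2; 1; 2; 0; 1; 2; 2; 0; 1; 0]; [:: 0; 2; 2; 2; 0; 2; 1; 1; 0; 0; 1]; [:: 0; 2; 1; 2; 0; 1; 2; 0; 2; 1; 0];
  [:: 0; 1; 2; 2; 0; 2; 2; 0; 1; 0; 1]; [:: 0; 1; 2; 1; 0; 2; 1; 0; 0; 2; 2]; [:: 0; 2; 2; 1; 0; 1; 0; 1; 2; 2; 0];
  [:: 0; 2; 1; 2; 0; 1; 0; 2; 2; 0; 1]; [:: 0; 1; 1; 1; 0; 2; 0; 1; 0; 1; 1]; [:: 0; 1; 2; 2; 0; 1; 0; 0; 2; 1; 2];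
  [:: 0; 2; 2; 2; 0; 0; 1; 1; 2; 1; 0]; [:: 0; 1; 2; 2; 0; 0; 2; 2; 1; 0; 1]; [:: 0; 1; 1; 1; 0; 0; 2; 1; 0; 1; 1];
  [:: 0; 2; 1; 1; 0; 0; 1; 0; 2; 2; 2]; [:: 0; 1; 1; 1; 0; 0; 0; 1; 2; 1; 1]; [:: 0; 2; 2; 0; 2; 1; 1; 2; 1; 0; 0];
  [:: 0; 1; 2; 0; 1; 2; 2; 2; 0; 1; 0]; [:: 0; 1; 1; 0; 1; 1; 1; 2; 0; 0; 1]; [:: 0; 2; 2; 0; 1; 2; 1; 0; 2; 1; 0];
  [:: 0; 1; 1; 0; 1; 1; 1; 0; 2; 0; 1]; [:: 0; 1; 1; 0; 1; 1; 1; 0; 0; 2; 1]; [:: 0; 2; 1; 0; 1; 1; 0; 1; 1; 1; 0];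
  [:: 0; 1; 1; 0; 2; 2; 0; 2; 1; 0; 2]; [:: 0; 2; 2; 0; 2; 1; 0; 2; 0; 1; 1]; [:: 0; 1; 2; 0; 2; 1; 0; 0; 2; 1; 2];
  [:: 0; 2; 1; 0; 2; 0; 1; 1; 2; 2; 0]; [:: 0; 2; 2; 0; 1; 0; 2; 1; 2; 0; 1]; [:: 0; 2; 1; 0; 2; 0; 1; 1; 0; 2; 2];
  [:: 0; 2; 2; 0; 1; 0; 1; 0; 1; 2; 2]; [:: 0; 2; 2; 0; 1; 0; 0; 1; 2; 2; 1]; [:: 0; 1; 1; 0; 0; 2; 2; 1; 2; 2; 0];
  [:: 0; 1; 1; 0; 0; 2; 2; 1; 2; 0; 2]; [:: 0; 2; 1; 0; 0; 2; 1; 2; 0; 1; 2]; [:: 0; 2; 1; 0; 0; 2; 2; 0; 1; 2; 1];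
  [:: 0; 2; 1; 0; 0; 2; 0; 2; 1; 2; 1]; [:: 0; 2; 2; 0; 0; 0; 2; 1; 1; 1; 2]; [:: 0; 1; 0; 1; 1; 2; 1; 1; 1; 0; 0];
  [:: 0; 2; 0; 2; 1; 1; 1; 2; 0; 2; 0]; [:: 0; 1; 0; 1; 2; 1; 2; 2; 0; 0; 2]; [:: 0; 2; 0; 2; 1; 2; 1; 0; 2; 1; 0];
  [:: 0; 2; 0; 2; 1; 1; 2; 0; 1; 0; 2]; [:: 0; 2; 0; 1; 1; 2; 2; 0; 0; 2; 1]; [:: 0; 1; 0; 2; 2; 2; 0; 2; 1; 1; 0];
  [:: 0; 1; 0; 1; 2; 2; 0; 2; 2; 0; 1]; [:: 0; 1; 0; 2; 1; 2; 0; 1; 0; 2; 2]; [:: 0; 1; 0; 1; 2; 2; 0; 0; 2; 2; 1];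
  [:: 0; 1; 0; 1; 1; 0; 1; 1; 1; 2; 0]; [:: 0; 1; 0; 1; 1; 0; 1; 1; 1; 0; 2]; [:: 0; 2; 0; 1; 1; 0; 2; 2; 0; 2; 1];
  [:: 0; 1; 0; 2; 2; 0; 1; 0; 2; 1; 2]; [:: 0; 2; 0; 1; 1; 0; 0; 2; 2; 1; 2]; [:: 0; 2; 0; 1; 0; 1; 2; 1; 2; 2; 0];
  [:: 0; 2; 0; 2; 0; 2; 1; 1; 2; 0; 1]; [:: 0; 1; 0; 1; 0; 1; 2; 2; 0; 2; 2]; [:: 0; 2; 0; 1; 0; 1; 1; 0; 1; 1; 1];
  [:: 0; 1; 0; 2; 0; 2; 0; 2; 1; 1; 2]; [:: 0; 1; 0; 2; 0; 0; 1; 2; 2; 2; 1]; [:: 0; 1; 0; 0; 2; 1; 2; 2; 1; 2; 0];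
  [:: 0; 2; 0; 0; 1; 2; 2; 2; 1; 0; 1]; [:: 0; 1; 0; 0; 1; 2; 2; 1; 0; 2; 2]; [:: 0; 1; 0; 0; 2; 1; 2; 0; 1; 2; 2];
  [:: 0; 1; 0; 0; 1; 2; 0; 1; 2; 2; 2]; [:: 0; 2; 0; 0; 2; 0; 2; 1; 1; 1; 2]; [:: 0; 2; 0; 0; 0; 2; 2; 1; 1; 1; 2];
  [:: 0; 0; 1; 2; 2; 2; 1; 2; 1; 0; 0]; [:: 0; 0; 2; 2; 1; 1; 1; 2; 0; 2; 0]; [:: 0; 0; 2; 1; 2; 2; 1; 2; 0; 0; 1];
  [:: 0; 0; 2; 1; 1; 1; 2; 0; 2; 2; 0]; [:: 0; 0; 1; 2; 2; 2; 1; 0; 1; 0; 2]; [:: 0; 0; 2; 2; 1; 2; 2; 0; 0; 1; 1];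
  [:: 0; 0; 1; 2; 1; 1; 0; 1; 1; 1; 0]; [:: 0; 0; 1; 2; 2; 1; 0; 2; 2; 0; 1]; [:: 0; 0; 2; 2; 1; 2; 0; 2; 0; 1; 1];
  [:: 0; 0; 1; 1; 2; 1; 0; 0; 2; 2; 2]; [:: 0; 0; 1; 1; 2; 0; 2; 2; 1; 2; 0]; [:: 0; 0; 2; 1; 2; 0; 1; 2; 2; 0; 1];
  [:: 0; 0; 2; 1; 2; 0; 1; 2; 0; 2; 1]; [:: 0; 0; 2; 2; 1; 0; 1; 0; 1; 2; 2]; [:: 0; 0; 2; 2; 2; 0; 0; 1; 1; 2; 1];
  [:: 0; 0; 2; 2; 0; 2; 1; 1; 2; 1; 0]; [:: 0; 0; 1; 2; 0; 1; 2; 2; 2; 0; 1]; [:: 0; 0; 2; 2; 0; 1; 2; 1; 0; 2; 1];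
  [:: 0; 0; 2; 1; 0; 1; 1; 0; 1; 1; 1]; [:: 0; 0; 2; 1; 0; 2; 0; 1; 1; 2; 2]; [:: 0; 0; 1; 1; 0; 0; 2; 2; 1; 2; 2];
  [:: 0; 0; 1; 0; 1; 1; 2; 1; 1; 1; 0]; [:: 0; 0; 2; 0; 2; 1; 1; 1; 2; 0; 2]; [:: 0; 0; 2; 0; 2; 1; 2; 1; 0; 2; 1];
  [:: 0; 0; 1; 0; 2; 2; 2; 0; 2; 1; 1]; [:: 0; 0; 1; 0; 1; 1; 0; 1; 1; 1; 2]; [:: 0; 0; 2; 0; 1; 0; 1; 2; 1; 2; 2];
  [:: 0; 0; 1; 0; 0; 2; 1; 2; 2; 1; 2]; [:: 0; 0; 0; 1; 2; 2; 2; 1; 2; 1; 0]; [:: 0; 0; 0; 2; 2; 1; 1; 1; 2; 0; 2];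
  [:: 0; 0; 0; 2; 1; 1; 1; 2; 0; 2; 2]; [:: 0; 0; 0; 1; 2; 1; 1; 0; 1; 1; 1]; [:: 0; 0; 0; 1; 1; 2; 0; 2; 2; 1; 2];
  [:: 0; 0; 0; 2; 2; 0; 2; 1; 1; 2; 1]; [:: 0; 0; 0; 1; 0; 1; 1; 2; 1; 1; 1]; [:: 0; 0; 0; 0; 1; 2; 2; 2; 1; 2; 1]].

Notation outer_vector a := (nth [::] outer_vectors a).

Lemma outer_shape :
  (size outer_vectors == 330) &&
  all (fun u => [&& size u == 11, all (gtn 3) u & count_mem 0 u == 4]) outer_vectors.
Proof. by vm_compute. Qed.

Lemma outer_incomparable :
  pairwise (fun u v => vanishes_in_support u v && vanishes_in_support v u) outer_vectors.
Proof. by vm_compute. Qed.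

Lemma outer_separated : triplewise separated outer_vectors.
Proof. by vm_compute. Qed.

Definition outer_lab (a : 'I_330) (i : 'I_11) : nat := nth 0 (outer_vector a) i.

Lemma size_outer_vectors : size outer_vectors = 330.
Proof. by case/andP: outer_shape => /eqP. Qed.

Lemma outer_vector_shape (a : 'I_330) :
  [&& size (outer_vector a) == 11, all (gtn 3) (outer_vector a)
    & count_mem 0 (outer_vector a) == 4].
Proof.
case/andP: outer_shape => _ /allP; apply; apply: mem_nth.
by rewrite size_outer_vectors.
Qed.

Lemma size_outer_vector (a : 'I_330) : size (outer_vector a) = 11.
Proof. by case/and3P: (outer_vector_shape a) => /eqP. Qed.

Lemma outer_lab_lt3 a i : outer_lab a i < 3.
Proof.
case/and3P: (outer_vector_shape a) => _ /allP lt3 _.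
by apply: lt3; apply: mem_nth; rewrite size_outer_vector.
Qed.

Lemma card_outer_lab_eq0 a : #|[set i | outer_lab a i == 0]| = 4.
Proof.
rewrite (card_nth_count (pred1 0) (size_outer_vector a)).
by case/and3P: (outer_vector_shape a) => _ _ /eqP.
Qed.

Lemma outer_admissible : admissible [set: 'I_330] outer_lab.
Proof.
have in_range (a : 'I_330) : nat_of_ord a \in gtn (size outer_vectors).
  by rewrite inE size_outer_vectors.
have vanishing (a b : 'I_330) : vanishes_in_support (outer_vector a) (outer_vector b) ->
    exists i, (outer_lab a i == 0) && (outer_lab b i != 0).
  by case/vanishes_in_supportP=> i; rewrite size_outer_vector => lt_i; exists (Ordinal lt_i).
apply: admissible_ord => [a b nab | a b c ab bc].
  have /(pairwiseP [::]) incomparable := outer_incomparable.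
  case: (ltngtP a b) => [ab|ba|/val_inj eab]; last by rewrite eab eqxx in nab.
    by case/andP: (incomparable a b (in_range a) (in_range b) ab) => /vanishing.
  by case/andP: (incomparable b a (in_range b) (in_range a) ba) => _ /vanishing.
have := triplewiseP [::] outer_separated ab bc.
rewrite size_outer_vectors => /(_ (ltn_ord c)) /separatedP[i].
by rewrite size_outer_vector => lt_i sep; exists (Ordinal lt_i).
Qed.

Lemma all_iotaP n (P : pred nat) (k : 'I_n) : all P (iota 0 n) -> P k.
Proof. by move/allP; apply; rewrite mem_iota add0n ltn_ord. Qed.

Lemma has_iotaP n (P : pred nat) : has P (iota 0 n) -> exists k : 'I_n, P k.
Proof.
by case/hasP=> k; rewrite mem_iota => /andP[_ lt_kn] Pk; exists (Ordinal lt_kn).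
Qed.

Definition inner_label (k j : nat) : nat := if j == k then 0 else if k < j then 1 else 2.

Definition inner_lab (k j : 'I_6) : nat := inner_label k j.

Lemma inner_one_zero k : #|[set j | inner_lab k j == 0]| = 1.
Proof.
rewrite -[RHS](cards1 k); apply: eq_card => j; rewrite !inE /inner_lab /inner_label.
have [jk|njk] := eqVneq (nat_of_ord j) (nat_of_ord k); first exact/esym/eqP/val_inj.
by case: ifP => _; apply/esym/negbTE; apply: contra_neq njk => ->.
Qed.

Lemma inner_admissible : admissible [set: 'I_6] inner_lab.
Proof.
have all_sep : all (fun s => all (fun t => all (fun u => ((s == t) && (t == u)) ||
    has (fun j => separating (inner_label s j) (inner_label t j) (inner_label u j))
      (iota 0 6)) (iota 0 6)) (iota 0 6)) (iota 0 6).
  by vm_compute.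
move=> s t u _ _ _ neq.
have /orP[/andP[/eqP st /eqP tu] | /has_iotaP[j sep]] :=
  all_iotaP u (all_iotaP t (all_iotaP s all_sep)).
  by case: neq; split; apply: val_inj.
by exists j.
Qed.

Lemma inner_compatible p q r : p < 3 -> q < 3 -> r < 3 -> separating p q r ->
  forall s t u, exists j, separating (blowup_label inner_lab p s j)
    (blowup_label inner_lab q t j) (blowup_label inner_lab r u j).
Proof.
have all_sep : all (fun p => all (fun q => all (fun r => separating p q r ==>
    all (fun s => all (fun t => all (fun u => has (fun j =>
      separating (blowup_label inner_label p s j) (blowup_label inner_label q t j)
        (blowup_label inner_label r u j))
      (iota 0 6)) (iota 0 6)) (iota 0 6)) (iota 0 6))
    (iota 0 3)) (iota 0 3)) (iota 0 3).
  by vm_compute.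
move=> lt_p lt_q lt_r sep s t u.
have all_pqr := all_iotaP (Ordinal lt_r) (all_iotaP (Ordinal lt_q)
  (all_iotaP (Ordinal lt_p) all_sep)).
have [j sep_j] := has_iotaP (all_iotaP u (all_iotaP t (all_iotaP s (implyP all_pqr sep)))).
by exists j.
Qed.

Notation W := ('F_3 * 'F_3 * 'F_3 * 'F_3 * 'F_3 * 'F_3)%type.

Section BasePoints.
Local Open Scope ring_scope.

Lemma Fp3_char3 (a : 'F_3) : a + a + a = 0.
Proof. by rewrite -mulr2n -mulrSr -mulr_natr pchar_Fp_0 ?mulr0. Qed.

Lemma rV_char3 n (u : 'rV['F_3]_n) : u + u + u = 0.
Proof. by apply/rowP => k; rewrite !mxE Fp3_char3. Qed.

Lemma pair_char3 (A B : zmodType) :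
    (forall a : A, a + a + a = 0) -> (forall b : B, b + b + b = 0) ->
  forall x : A * B, x + x + x = 0.
Proof. by move=> A3 B3 [a b]; apply: (congr2 pair (A3 a) (B3 b)). Qed.

Lemma W_char3 (x : W) : x + x + x = 0.
Proof. by move: x; do !apply: pair_char3; exact: Fp3_char3. Qed.

Definition cap_seq (l : seq W) : bool :=
  all (fun a => all (fun b => (- (a + b) \in l) ==> (a == b)) l) l.

Definition sum_free_seq (l1 l2 l3 : seq W) : bool :=
  all (fun a => all (fun b => - (a + b) \notin l3) l2) l1.

Definition vec6 (x : W) : 'rV['F_3]_6 :=
  let: (a, b, c, d, e, f) := x in \row_k [:: a; b; c; d; e; f]`_k.

Lemma vec6D : {morph vec6 : x y / x + y}.
Proof.
move=> [[[[[a b] c] d] e] f] [[[[[a' b'] c'] d'] e'] f']; apply/rowP => k.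
by rewrite !mxE; case: k => [[|[|[|[|[|[|]]]]]] ?].
Qed.

Lemma vec6_inj : injective vec6.
Proof.
move=> [[[[[a b] c] d] e] f] [[[[[a' b'] c'] d'] e'] f'] /rowP eq_vec.
have coord k (lt_k6 : (k < 6)%N) := eq_vec (Ordinal lt_k6).
move: (coord 0 isT) (coord 1 isT) (coord 2 isT) (coord 3 isT) (coord 4 isT) (coord 5 isT).
by rewrite !mxE /= => -> -> -> -> -> ->.
Qed.

Lemma cap_seq_image l : cap_seq l -> cap_set (vec6 @: [set x in l]).
Proof.
move=> /allP capl _ _ _ /imsetP[a la ->] /imsetP[b lb ->] /imsetP[c lc ->] /eqP.
rewrite (morph_sum3_eq0 vec6_inj vec6D) => /eqP abc0; rewrite !inE in la lb lc.
have c_eq : c = - (a + b) by apply/eqP; rewrite -addr_eq0 addrC abc0.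
move: (allP (capl a la) b lb); rewrite -c_eq lc => /eqP ab; subst b.
by split => //; congr vec6; apply/eqP; rewrite c_eq -addr_eq0 addrA W_char3.
Qed.

Lemma sum_free_seq_image l1 l2 l3 : sum_free_seq l1 l2 l3 ->
  sum_free (vec6 @: [set x in l1]) (vec6 @: [set x in l2]) (vec6 @: [set x in l3]).
Proof.
move=> /allP free _ _ _ /imsetP[a la ->] /imsetP[b lb ->] /imsetP[c lc ->].
rewrite (morph_sum3_eq0 vec6_inj vec6D); rewrite !inE in la lb lc.
apply: contraNneq (allP (free a la) b lb) => abc0.
suff -> : - (a + b) = c by [].
by apply/esym/eqP; rewrite -addr_eq0 addrC abc0.
Qed.

Definition E_points : seq W := [::
  (2,0,2,0,2,0); (1,1,2,2,2,0); (1,2,2,1,2,0); (1,0,1,0,1,0); (2,1,1,2,1,0); (2,2,1,1,1,0);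
  (0,1,0,0,0,2); (0,2,1,2,2,2); (2,2,1,1,1,2); (0,2,0,0,0,1); (1,1,2,2,2,1); (0,1,2,1,1,1)].

Definition P_points : seq W := [::
  (1,0,0,0,0,0); (0,1,0,0,0,0); (2,1,2,1,0,1); (1,0,2,2,1,1); (0,0,1,0,0,2); (0,2,1,2,2,1);
  (0,0,1,0,1,2); (1,2,2,0,0,0); (0,2,1,2,1,0); (0,0,2,1,2,1); (2,2,2,1,2,1); (0,2,0,1,1,2);
  (2,0,2,1,1,0); (2,1,1,2,0,2); (2,1,0,1,1,2); (2,2,2,2,1,1); (0,0,2,1,0,2); (2,0,0,2,1,1);
  (2,1,0,2,1,0); (2,2,1,1,0,0); (0,0,0,2,0,1); (1,0,0,0,0,1); (2,0,1,1,0,2); (0,1,2,2,0,1);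
  (1,1,2,0,1,1); (1,1,1,2,0,0); (2,1,2,2,2,0); (2,2,0,2,0,0); (1,2,1,1,1,1); (2,2,2,0,1,1);
  (0,2,1,2,2,0); (0,2,0,0,2,1); (1,0,2,2,2,0); (0,1,0,2,2,2); (1,2,0,0,1,1); (2,0,0,0,1,2);
  (1,1,1,1,2,0); (1,2,2,2,2,1); (0,1,0,1,0,1); (2,2,1,0,1,1); (1,0,0,0,1,0); (0,1,0,0,0,1);
  (2,0,1,2,2,2); (1,2,2,0,2,1); (2,2,2,2,0,0); (0,0,2,0,2,0); (0,1,0,2,1,2); (0,2,2,0,1,0);
  (0,0,2,2,1,2); (2,0,0,2,2,2); (1,2,0,2,1,1); (1,1,2,0,1,0); (1,0,0,1,0,1); (2,2,2,1,2,0);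
  (0,0,2,0,0,2); (2,1,2,0,0,0); (2,0,0,0,0,0); (0,2,0,0,0,0); (1,2,1,2,0,2); (2,0,1,1,2,2);
  (0,0,2,0,0,1); (0,1,2,1,1,2); (0,0,2,0,2,1); (2,1,1,0,0,0); (0,1,2,1,2,0); (0,0,1,2,1,2);
  (1,1,1,2,1,2); (0,1,0,2,2,1); (1,0,1,2,2,0); (1,2,2,1,0,1); (1,2,0,2,2,1); (1,1,1,1,2,2);
  (0,0,1,2,0,1); (1,0,0,1,2,2); (1,2,0,1,2,0); (1,1,2,2,0,0); (0,0,0,1,0,2); (2,0,0,0,0,2);
  (1,0,2,2,0,1); (0,2,1,1,0,2); (2,2,1,0,2,2); (2,2,2,1,0,0); (1,2,1,1,1,0); (1,1,0,1,0,0);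
  (2,1,2,2,2,2); (1,1,1,0,2,2); (0,1,2,1,1,0); (0,1,0,0,1,2); (2,0,1,1,1,0); (0,2,0,1,1,1);
  (2,1,0,0,2,2); (1,0,0,0,2,1); (2,2,2,2,1,0); (2,1,1,1,1,2); (0,2,0,2,0,2); (1,1,2,0,2,2);
  (2,0,0,0,2,0); (0,2,0,0,0,2); (1,0,2,1,1,1); (2,1,1,0,1,2); (1,1,1,1,0,0); (0,0,1,0,1,0);
  (0,2,0,1,2,1); (0,1,1,0,2,0); (0,0,1,1,2,1); (1,0,0,1,1,1); (2,1,0,1,2,2); (2,2,1,0,2,0);
  (2,0,0,2,0,2); (1,1,1,2,1,0); (0,0,1,0,0,1); (1,2,1,0,0,0)].

Definition Q_points : seq W := [::
  (1,0,0,0,2,1); (0,0,0,2,0,0); (0,1,0,0,1,1); (2,1,0,1,2,1); (0,1,1,0,2,2); (2,0,0,2,0,1);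
  (2,2,0,2,0,2); (0,1,1,2,1,2); (2,1,0,1,0,1); (2,0,1,2,2,2); (1,0,1,0,0,1); (2,2,2,2,1,1);
  (1,1,1,1,0,1); (1,2,0,1,1,0); (1,2,2,0,2,0); (0,1,0,2,1,2); (2,2,1,0,2,2); (1,0,2,0,2,1);
  (0,2,1,0,0,1); (1,1,0,1,1,2); (0,2,0,1,0,2); (2,1,1,2,1,1); (0,0,2,1,2,2); (2,0,1,1,2,0);
  (0,0,1,1,1,2); (1,0,1,0,1,2); (1,1,1,0,0,2); (1,1,2,0,2,1); (0,0,0,2,2,1); (1,0,1,0,0,0);
  (1,2,2,0,1,1); (2,0,2,1,1,0); (0,1,1,1,1,1); (2,2,2,0,1,2); (1,2,0,2,2,1); (0,0,1,0,0,2);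
  (1,0,1,0,1,1); (1,2,2,1,0,1); (2,0,2,2,1,1); (0,1,2,1,2,1); (0,1,2,2,0,1); (1,1,1,1,2,0);
  (2,1,1,0,0,0); (2,1,0,2,2,2); (0,2,0,1,1,2); (0,0,2,2,1,1); (0,1,0,1,0,2); (1,2,0,1,0,1);
  (2,2,1,0,2,0); (1,2,2,1,2,1); (0,0,2,1,0,0); (2,2,0,2,2,2); (0,0,2,0,0,2); (0,2,0,1,1,1);
  (1,0,0,2,0,1); (1,1,1,0,0,0); (2,0,0,0,1,2); (0,0,0,1,0,0); (0,2,0,0,2,2); (1,2,0,2,1,2);
  (0,2,2,0,1,1); (1,0,0,1,0,2); (1,1,0,1,0,1); (0,2,2,1,2,1); (1,2,0,2,0,2); (1,0,2,1,1,1);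
  (2,0,2,0,0,2); (1,1,1,1,2,2); (2,2,2,2,0,2); (2,1,0,2,2,0); (2,1,1,0,1,0); (0,2,0,1,2,1);
  (1,1,2,0,1,1); (2,0,1,0,1,2); (0,1,2,0,0,2); (2,2,0,2,2,1); (0,1,0,2,0,1); (1,2,2,1,2,2);
  (0,0,1,2,1,1); (1,0,2,2,1,0); (0,0,2,2,2,1); (2,0,2,0,2,1); (2,2,2,0,0,1); (2,2,1,0,1,2);
  (0,0,0,1,1,2); (2,0,2,0,0,0); (2,1,1,0,2,2); (1,0,1,2,2,0); (0,2,2,2,2,2); (1,1,1,0,2,1);
  (2,1,0,1,1,2); (0,0,2,0,0,1); (2,0,2,0,2,2); (2,1,1,2,0,2); (1,0,1,1,2,2); (0,2,1,2,1,2);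
  (0,2,1,1,0,2); (2,2,2,2,1,0); (1,2,2,0,0,0); (1,2,0,1,1,1); (0,1,0,2,2,1); (0,0,1,1,2,2);
  (0,2,0,2,0,1); (2,1,0,2,0,2); (1,1,2,0,1,0); (2,1,1,2,1,2); (0,0,1,2,0,0); (1,1,0,1,1,1);
  (0,0,1,0,0,1); (0,1,0,2,2,2); (2,0,0,1,0,2); (2,2,2,0,0,0)].

End BasePoints.

Definition base_points (p : nat) : seq W :=
  match p with 0 => E_points | 1 => P_points | _ => Q_points end.

Definition base (p : nat) : {set 'rV['F_3]_6} := vec6 @: [set x in base_points p].

Lemma base_cap p : cap_set (base p).
Proof. by apply: cap_seq_image; case: p => [|[|p]]; vm_compute. Qed.

Lemma separating_sorted p q r : p <= q -> q <= r -> separating p q r ->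
  [&& p == 0, q == 0 & 0 < r] || [&& p == 0, q == 1 & r == 2].
Proof. rewrite /separating; lia. Qed.

Lemma base_sum_free p q r : separating p q r -> sum_free (base p) (base q) (base r).
Proof.
move: p q r; apply: (@sorted3_ind _ leq) => [|p q r free_pqr|p q r free_pqr|p q r pq qr].
- exact: leq_total.
- by rewrite separating_swap12 => /free_pqr /sum_free_swap12.
- by rewrite separating_swap23 => /free_pqr /sum_free_swap23.
case/(separating_sorted pq qr)/orP.
  move=> /and3P[/eqP-> /eqP-> r_gt0].
  by case: r {qr} r_gt0 => [|[|r]] // _; apply: sum_free_seq_image; vm_compute.
by move=> /and3P[/eqP-> /eqP-> /eqP->]; apply: sum_free_seq_image; vm_compute.
Qed.

Lemma card_base p : #|base p| = if p == 0 then 12 else 112.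
Proof.
have uniq_points : uniq (base_points p) by case: p => [|[|p]]; vm_compute.
rewrite card_imset; last exact: vec6_inj.
by rewrite cardsE (card_uniqP uniq_points); case: p {uniq_points} => [|[|p]].
Qed.

Definition lifted : {set 'I_330 * {ffun 'I_11 -> 'I_6}} :=
  blowup [set: 'I_330] outer_lab ord0.

Definition lifted_lab := blowup_lab outer_lab inner_lab.

Lemma lifted_admissible : admissible lifted lifted_lab.
Proof.
apply: blowup_admissible.
- exact: outer_lab_lt3.
- exact: outer_admissible.
- exact: inner_admissible.
- exact: inner_compatible.
Qed.

Lemma card_lifted : #|lifted| = (330 * 6 ^ 4)%N.
Proof.
rewrite card_blowup (eq_bigr (fun _ => 6 ^ 4)%N) => [|a _]; last first.
  by rewrite card_ord card_outer_lab_eq0.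
by rewrite sum_nat_const cardsT card_ord.
Qed.

Lemma prod_card_base_lifted xk :
  (\prod_ij #|base (lifted_lab xk ij)| = 12 ^ 4 * 112 ^ 62)%N.
Proof.
set Z := [set ij | lifted_lab xk ij == 0].
have card_Z : #|Z| = 4.
  by rewrite card_blowup_lab_eq0 ?card_outer_lab_eq0 //; exact: inner_one_zero.
have card_notZ : #|~: Z| = 62.
  by have := cardsC Z; rewrite card_Z card_prod !card_ord; lia.
rewrite (eq_bigr (fun ij => if ij \in Z then 12 else 112)%N); last first.
  by move=> ij _; rewrite card_base inE.
by rewrite prod_nat_if card_Z card_notZ.
Qed.

Definition A66 := box_union base lifted lifted_lab.

Lemma A66_cap : cap_set A66.
Proof. exact: box_union_cap base_cap base_sum_free lifted_admissible. Qed.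

Lemma card_A66 : #|A66| = ('C(11, 7) * 6 ^ 4 * 12 ^ 4 * 112 ^ 62)%N.
Proof.
rewrite (card_box_union (@rV_char3 6) base_sum_free lifted_admissible).
have -> : 'C(11, 7) = 330 by [].
rewrite (eq_bigr _ (fun xk _ => prod_card_base_lifted xk)) sum_nat_const card_lifted.
(* Rewriting with mulnA here would unfold 112 ^ 62 in unary. *)
exact: mulnA.
Qed.

Theorem theorem2p15 :
  exists A : {set F3n 396},
    is_cap_set A /\ #|A| = ('C(11, 7) * 6 ^ 4 * 12 ^ 4 * 112 ^ 62)%N.
Proof.
exists (flatten_blocks @: A66); split.
  exact: cap_set_image flatten_blocks_inj flatten_blocksD A66_cap.
by rewrite card_imset ?card_A66 //; exact: flatten_blocks_inj.
Qed.
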